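(* For every $\alpha\in\mathbb{R}$, the sequence $\{k+\alpha\}_{k=0}^{\infty}$ is not a Legendre multiplier sequence.
   Context: The Legendre polynomials $\mathfrak{Le}_n(x)$ are defined by $\frac{1}{\sqrt{1-2xt+t^2}}=\sum_{k=0}^{\infty}\mathfrak{Le}_k(x)t^k$. A real sequence $\{\gamma_k\}_{k=0}^{\infty}$ is a Legendre multiplier sequence if, for every $n$ and all real $a_0,\dots,a_n$, the polynomial $\sum_{k=0}^n a_k\gamma_k\mathfrak{Le}_k(x)$ has only real zeros whenever $\sum_{k=0}^n a_k\mathfrak{Le}_k(x)$ has only real zeros. *)

From HB Require Import structures.
From mathcomp Require Import all_boot all_order all_algebra.
From mathcomp Require Import complex.
From mathcomp Require Import reals.
Set Implicit Arguments. Unset Strict Implicit. Unset Printing Implicit Defensive.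
Import Order.TTheory GRing.Theory Num.Theory.
Local Open Scope ring_scope.

(* Legendre polynomials via the generating function
   (1 - 2xt + t^2)^(-1/2) = sum_m binom(-1/2, m) (-1)^m (2xt - t^2)^m
                          = sum_m C(2m,m)/4^m (2xt - t^2)^m,
   and Le_n(x) = [t^n] of this series.  Only m <= n contribute to [t^n].
   The bivariate polynomial (2xt - t^2) is an element of {poly {poly R}}
   with outer variable t and inner variable x. *)
Definition legendre_u (R : nzRingType) : {poly {poly R}} :=
  ('X *+ 2)%:P * 'X - 'X ^+ 2.

Definition legendre (R : fieldType) (n : nat) : {poly R} :=
  \sum_(m < n.+1) (('C(2 * m, m))%:R / 4%:R ^+ m) *: (legendre_u R ^+ m)`_n.

Definition real_rooted (R : rcfType) (p : {poly R}) : Prop :=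
  p = 0 \/ forall z : R[i], root (map_poly (real_complex R) p) z -> 'Im z = 0.

Definition legendre_multiplier_sequence (R : rcfType) (gamma : nat -> R) : Prop :=
  forall (n : nat) (a : nat -> R),
    real_rooted (\sum_(k < n.+1) a k *: legendre R k) ->
    real_rooted (\sum_(k < n.+1) (a k * gamma k) *: legendre R k).

From HB Require Import structures.
From mathcomp Require Import all_boot all_order all_algebra.
From mathcomp Require Import complex.
From mathcomp Require Import reals.
From mathcomp Require Import ring lra zify.
Import Order.TTheory GRing.Theory Num.Theory.
Local Open Scope ring_scope.

(* Expanding x^2 and x^4 in the Legendre basis and multiplying the k-th
   coordinate by k + alpha gives the even polynomials
   (2 + alpha) x^2 - 2/3  and  (4 + alpha) x^4 - 12/7 x^2 - 8/35.
   Write such a polynomial as q(x^2).  For alpha < -2 in the first case, and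
   alpha >= -2 in the second, q is positive at some negative point and
   negative at 0, hence has a root z < 0, and sqrt z is a non-real zero of
   q(x^2), although x^2 and x^4 have only real zeros. *)

Section LegendreExpansion.
Variable R : fieldType.

Lemma legendre_uE : legendre_u R = 'X * (('X *+ 2)%:P - 'X).
Proof. by rewrite /legendre_u; ring. Qed.

Lemma coef_legendre_u_exp m n : (legendre_u R ^+ m)`_n =
  if (n < m)%N then 0
  else ((-1) ^+ (n - m) * 2 ^+ (2 * m - n) *+ 'C(m, n - m)) *: 'X^(2 * m - n).
Proof.
rewrite legendre_uE exprMn coefXnM; case: ltnP => // le_mn.
rewrite exprBn coef_sum.
have polyC_term i : (-1) ^+ i * ('X *+ 2 : {poly R})%:P ^+ (m - i) =
    ((-1) ^+ i * ('X *+ 2) ^+ (m - i))%:P.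
  by rewrite rmorphM !rmorphXn rmorphN1.
under eq_bigr => i _ do rewrite polyC_term coefMn coefCM coefXn mulr_natr mulrb.
pose F i := (-1) ^+ i * ('X *+ 2 : {poly R}) ^+ (m - i) *+ 'C(m, i).
transitivity (\sum_(i < m.+1 | i == (n - m)%N :> nat) F i).
  rewrite [RHS]big_mkcond; apply: eq_bigr => i _.
  by rewrite eq_sym; case: eqP; rewrite ?mul0rn.
rewrite big_ord1_eq ltnS /F; case: leqP => [_ | /bin_small->]; last first.
  by rewrite mulr0n scale0r.
have -> : (m - (n - m) = 2 * m - n)%N by lia.
rewrite -scalerMnl; congr (_ *+ _).
rewrite -mul_polyC rmorphM rmorphXn rmorphN1 -mulrA; congr (_ * _).
by rewrite -['X *+ 2]mulr_natl exprMn rmorphXn rmorph_nat.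
Qed.
End LegendreExpansion.

Ltac coefwise_field_deg4 :=
  by apply/polyP => -[|[|[|[|[|?]]]]]; rewrite !coefE /=; field.

(* [subn], [muln] and [binomial] are [simpl never]; [cbv] evaluates them on
   the concrete indices. *)
Ltac expand_legendre :=
  rewrite /legendre !big_ord_recr big_ord0 /= !coef_legendre_u_exp /=;
  cbv [subn muln addn binomial Nat.sub Nat.mul Nat.add].

Section SmallLegendre.
Variable R : numFieldType.

Lemma legendre0 : legendre R 0 = 1.
Proof. by expand_legendre; coefwise_field_deg4. Qed.

Lemma legendre2 : legendre R 2 = (3 / 2) *: 'X^2 - (1 / 2)%:P.
Proof. by expand_legendre; coefwise_field_deg4. Qed.

Lemma legendre4 : legendre R 4 = (35 / 8) *: 'X^4 - (15 / 4) *: 'X^2 + (3 / 8)%:P.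
Proof. by expand_legendre; coefwise_field_deg4. Qed.

Definition legendre_coords_X2 : nat -> R := nth 0 [:: 1 / 3; 0; 2 / 3].
Definition legendre_coords_X4 : nat -> R := nth 0 [:: 1 / 5; 0; 4 / 7; 0; 8 / 35].

Lemma legendre_expansion_X2 :
  \sum_(k < 3) legendre_coords_X2 k *: legendre R k = 'X^2.
Proof.
rewrite !big_ord_recr big_ord0 /= legendre0 legendre2 /legendre_coords_X2 /=.
by rewrite scale0r; coefwise_field_deg4.
Qed.

Lemma legendre_expansion_X4 :
  \sum_(k < 5) legendre_coords_X4 k *: legendre R k = 'X^4.
Proof.
rewrite !big_ord_recr big_ord0 /= legendre0 legendre2 legendre4 /legendre_coords_X4 /=.
by rewrite !scale0r; coefwise_field_deg4.
Qed.

Lemma shifted_image_X2 (alpha : R) :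
  \sum_(k < 3) (legendre_coords_X2 k * (k%:R + alpha)) *: legendre R k =
  ((2 + alpha) *: 'X - (2 / 3)%:P) \Po 'X^2.
Proof.
rewrite !big_ord_recr big_ord0 /= legendre0 legendre2 /legendre_coords_X2 /=.
rewrite mul0r scale0r comp_polyB comp_polyZ comp_polyX comp_polyC.
by coefwise_field_deg4.
Qed.

Lemma shifted_image_X4 (alpha : R) :
  \sum_(k < 5) (legendre_coords_X4 k * (k%:R + alpha)) *: legendre R k =
  ((4 + alpha) *: 'X^2 - (12 / 7) *: 'X - (8 / 35)%:P) \Po 'X^2.
Proof.
rewrite !big_ord_recr big_ord0 /= legendre0 legendre2 legendre4 /legendre_coords_X4 /=.
rewrite !mul0r !scale0r !comp_polyB !comp_polyZ comp_Xn_poly comp_polyX comp_polyC.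
by coefwise_field_deg4.
Qed.

End SmallLegendre.

Section RealRootedComposition.
Variable R : rcfType.

Lemma real_rooted_Xn n : real_rooted ('X^n : {poly R}).
Proof.
right=> z; rewrite map_polyXn rootE hornerXn expf_eq0 => /andP[_ /eqP->].
by apply/Creal_ImP; rewrite real0.
Qed.

Lemma root_comp_X2_sqrtC (q : {poly R}) (y : R) : root q y ->
  root (map_poly (real_complex R) (q \Po 'X^2)) (sqrtC y%:C%C).
Proof.
move=> /rootP qy0; apply/rootP.
by rewrite map_comp_poly horner_comp map_polyXn hornerXn sqrtCK horner_map qy0 rmorph0.
Qed.

Lemma not_real_rooted_comp_X2 {q : {poly R}} (y : R) :
  y < 0 -> 0 < q.[y] -> q.[0] < 0 -> ~ real_rooted (q \Po 'X^2).
Proof.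
move=> y_lt0 qy_gt0 q0_lt0.
have [z /andP[_ z_le0] qz0] : exists2 z, y <= z <= 0 & root (- q) z.
  apply: poly_ivt; first exact: ltW.
  by rewrite !hornerN oppr_le0 oppr_ge0 !ltW.
rewrite rootN in qz0.
have z_lt0 : z < 0.
  by rewrite lt_neqAle z_le0 andbT; apply: contraTneq qz0 => ->; rewrite rootE lt_eqF.
have q_neq0 : q != 0 by apply: contraTneq q0_lt0 => ->; rewrite horner0 ltxx.
case=> [/eqP | real_roots].
  by rewrite comp_poly_eq0 ?size_polyXn // (negPf q_neq0).
have /Creal_ImP := real_roots _ (root_comp_X2_sqrtC _ _ qz0).
by rewrite realEsqr sqrtCK -(rmorph0 (real_complex R)) lecR leNgt z_lt0.
Qed.

End RealRootedComposition.

Theorem proposition4p3 (R : realType) (alpha : R) :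
  ~ legendre_multiplier_sequence (fun k : nat => k%:R + alpha).
Proof.
move=> multiplier.
have [alpha_lt | alpha_ge] := ltrP alpha (-2).
- have := multiplier 2%N (@legendre_coords_X2 R).
  rewrite legendre_expansion_X2 shifted_image_X2 => /(_ (real_rooted_Xn _ _)) rooted.
  have shift_lt0 : 2 + alpha < 0 by lra.
  apply: (not_real_rooted_comp_X2 _ (2 + alpha)^-1 _ _ _ rooted); rewrite ?hornerE.
  + by rewrite invr_lt0.
  + by rewrite divff ?ltr0_neq0 //; lra.
  + lra.
- have := multiplier 4%N (@legendre_coords_X4 R).
  rewrite legendre_expansion_X4 shifted_image_X4 => /(_ (real_rooted_Xn _ _)) rooted.
  apply: (not_real_rooted_comp_X2 _ (-1) _ _ _ rooted); rewrite ?hornerE /=; lra.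
Qed.
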